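(* For any instance of the Max-Cut problem on a graph with $n$ vertices, the DLA of QWOA satisfies $\dim(\mathfrak g_{\mathrm{QWOA,Max\text{-}Cut}})=\mathcal O(n^4)$.
   Context: Max-Cut on an undirected simple graph $G=(V,E)$, $V=\{1,\dots,n\}$: feasible solutions are all $z\in\{0,1\}^n$ and the cost $C(z)$ is the number of edges $\{u,v\}$ with $z_u\ne z_v$. On $\mathbb C^{2^n}$, $H_C$ is diagonal with $H_C|z\rangle=C(z)|z\rangle$ and $H_M$ is the $2^n\times 2^n$ all-ones matrix (equivalent up to identity to the complete-graph adjacency matrix). $\mathfrak g_{\mathrm{QWOA,Max\text{-}Cut}}$ is the real Lie algebra generated by $iH_C$ and $iH_M$ (smallest real subspace containing them and closed under commutators); its dimension is its real dimension. *)

From HB Require Import structures.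
From mathcomp Require Import all_boot all_order all_algebra all_field.
Set Implicit Arguments. Unset Strict Implicit. Unset Printing Implicit Defensive.
Import Order.TTheory GRing.Theory Num.Theory.
Local Open Scope ring_scope.

Definition simple_graph (n : nat) (e : rel 'I_n) : Prop :=
  (forall u v, e u v = e v u) /\ (forall u, e u u = false).

(* Basis index i : 'I_(2^n) encodes the bit string z with z_u = bit u of i. *)
Definition bit_of (n : nat) (i : 'I_(2 ^ n)) (u : 'I_n) : bool :=
  odd (i %/ 2 ^ u).

Definition cut_cost (n : nat) (e : rel 'I_n) (z : 'I_n -> bool) : nat :=
  #|[set p : 'I_n * 'I_n | (p.1 < p.2)%N && e p.1 p.2 && (z p.1 != z p.2)]|.

Definition H_C (n : nat) (e : rel 'I_n) : 'M[algC]_(2 ^ n) :=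
  \matrix_(i, j) (if i == j then (cut_cost e (bit_of i))%:R else 0).

Definition H_M (n : nat) : 'M[algC]_(2 ^ n) := const_mx 1.

Definition lie_bracket (m : nat) (A B : 'M[algC]_m) : 'M[algC]_m :=
  A *m B - B *m A.

Definition real_lie_closed (m : nat) (P : 'M[algC]_m -> Prop) : Prop :=
  P 0 /\
  (forall A B, P A -> P B -> P (A + B)) /\
  (forall (c : algC) A, c \is Num.real -> P A -> P (c *: A)) /\
  (forall A B, P A -> P B -> P (lie_bracket A B)).

Definition lie_generated (m : nat) (S : 'M[algC]_m -> Prop) (A : 'M[algC]_m)
  : Prop :=
  forall P : 'M[algC]_m -> Prop,
    real_lie_closed P -> (forall X, S X -> P X) -> P A.

Definition real_lin_indep (m k : nat) (v : 'I_k -> 'M[algC]_m) : Prop :=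
  forall c : 'I_k -> algC, (forall i, c i \is Num.real) ->
    \sum_(i < k) c i *: v i = 0 -> forall i, c i = 0.

Definition real_dim_le (m : nat) (L : 'M[algC]_m -> Prop) (d : nat) : Prop :=
  forall k (v : 'I_k -> 'M[algC]_m),
    (forall i, L (v i)) -> real_lin_indep v -> (k <= d)%N.

Definition g_QWOA_MaxCut (n : nat) (e : rel 'I_n) : 'M[algC]_(2 ^ n) -> Prop :=
  lie_generated (fun X => X = 'i *: H_C e \/ X = 'i *: H_M n).

(* The cost Hamiltonian H_C is diagonal and takes at most K = n^2 + 1 values.
   Let U be the 0/1 matrix sending a basis state to its cost level.  Then
   H_C U = U Lam for the diagonal matrix Lam of levels, and, since each state
   has exactly one level, the all-ones matrix is U J U^T.  Hence the set of
   matrices a H_C + U B U^T (a complex, B a complex K x K matrix) contains both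
   generators and is closed under real combinations and commutators.  It is
   the image of a complex-linear map from C^(1 + K^2), so its real dimension,
   and that of the Lie algebra, is at most 2 (1 + K^2) = O(n^4). *)

From HB Require Import structures.
From mathcomp Require Import all_boot all_order all_algebra all_field.
From mathcomp Require Import ring zify.
From Stdlib Require Import ClassicalEpsilon.
Set Implicit Arguments. Unset Strict Implicit. Unset Printing Implicit Defensive.
Import Order.TTheory GRing.Theory Num.Theory.
Local Open Scope ring_scope.

Definition reim_row D (w : 'rV[algC]_D) : 'rV[algC]_(D + D) :=
  row_mx (map_mx (fun z => 'Re z) w) (map_mx (fun z => 'Im z) w).

Lemma reim_row_real D (w : 'rV[algC]_D) j : reim_row w 0 j \is Num.real.
Proof. by rewrite mxE; case: split => a; rewrite mxE ?Creal_Re ?Creal_Im. Qed.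

Lemma reim_row_real_comb k D (x : 'I_k -> algC) (w : 'I_k -> 'rV[algC]_D) :
  (forall i, x i \is Num.real) ->
  \sum_i x i *: reim_row (w i) = reim_row (\sum_i x i *: w i).
Proof.
move=> xr; apply/rowP => j; rewrite summxE; under eq_bigr do rewrite !mxE.
rewrite !mxE; case: split => a; rewrite !mxE summxE ?raddf_sum;
  by apply: eq_bigr => i _; rewrite !mxE /= (ReMl, ImMl).
Qed.

Lemma reim_row_eq0 D (w : 'rV[algC]_D) : reim_row w = 0 -> w = 0.
Proof.
move/eqP; rewrite row_mx_eq0 => /andP[/eqP Re0 /eqP Im0].
apply/rowP => j; rewrite [w 0 j]Crect mxE.
have := congr1 (fun M : 'rV_D => M 0 j) Re0.
have := congr1 (fun M : 'rV_D => M 0 j) Im0.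
by rewrite !mxE => -> ->; rewrite mulr0 addr0.
Qed.

Lemma real_row_free k D (R : 'M[algC]_(k, D)) :
  (forall i j, R i j \is Num.real) ->
  (forall x : 'I_k -> algC, (forall i, x i \is Num.real) ->
     \sum_i x i *: row i R = 0 -> forall i, x i = 0) ->
  row_free R.
Proof.
move=> Rreal Rindep; rewrite -kermx_eq0; apply/eqP/row_matrixP => i.
rewrite row0; move: (row i _) (row_sub i (kermx R)) => u /sub_kermxP uR0.
(* As R is real, the real and imaginary parts of a complex relation u *m R = 0
   are real relations between the rows of R. *)
have part_eq0 (part : {additive algC -> algC}) :
    (forall z, part z \is Num.real) ->
    (forall z r, r \is Num.real -> part (z * r) = part z * r) ->
    forall i, part (u 0 i) = 0.
  move=> part_real partMr; apply: Rindep => //; apply/rowP => j.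
  have := congr1 (fun M : 'rV_D => part (M 0 j)) uR0.
  rewrite !mxE raddf0 raddf_sum => <-; rewrite summxE; apply: eq_bigr => i' _.
  by rewrite !mxE partMr.
apply/rowP => j; rewrite mxE [u 0 j]Crect.
rewrite (part_eq0 (@Re algC)) ?(part_eq0 (@Im algC)) ?mulr0 ?addr0 //.
all: by [exact: Creal_Re | exact: Creal_Im
        | move=> z r rR; apply: ReMr | move=> z r rR; apply: ImMr].
Qed.

Lemma real_indep_rows_le k D (w : 'I_k -> 'rV[algC]_D) :
  (forall x : 'I_k -> algC, (forall i, x i \is Num.real) ->
     \sum_i x i *: w i = 0 -> forall i, x i = 0) ->
  (k <= D + D)%N.
Proof.
move=> windep; pose R := \matrix_i reim_row (w i).
have /eqP <-: row_free R.
  apply: real_row_free => [i j|x xr]; first by rewrite mxE reim_row_real.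
  under eq_bigr do rewrite rowK; rewrite reim_row_real_comb //.
  by move/reim_row_eq0; apply: windep.
exact: rank_leq_col.
Qed.

Lemma real_dim_le_linear_image m D
    (phi : {linear 'rV[algC]_D -> 'M[algC]_m}) (L : 'M[algC]_m -> Prop) :
  (forall X, L X -> exists w, X = phi w) -> real_dim_le L (D + D).
Proof.
move=> Lphi k v Lv vindep.
pose w i := sval (constructive_indefinite_description _ (Lphi _ (Lv i))).
have vE i : v i = phi (w i).
  exact: svalP (constructive_indefinite_description _ (Lphi _ (Lv i))).
apply: (real_indep_rows_le (w := w)) => x xr sum0; apply: vindep => //.
transitivity (phi (\sum_i x i *: w i)); last by rewrite sum0 raddf0.
rewrite raddf_sum; apply: eq_bigr => i _; rewrite vE.
exact/esym/linearZ_LR.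
Qed.

Section LevelSpan.

Variables (m K : nat) (lvl : 'I_m -> 'I_K) (lam : 'I_K -> algC).

Definition level_mx : 'M[algC]_(m, K) := \matrix_(i, c) (lvl i == c)%:R.
Definition level_diag : 'M[algC]_m := diag_mx (\row_i lam (lvl i)).

Local Notation U := level_mx.
Local Notation H := level_diag.
Let Lam : 'M[algC]_K := diag_mx (\row_c lam c).

Lemma level_diag_mul : H *m U = U *m Lam.
Proof.
rewrite mul_diag_mx mul_mx_diag; apply/matrixP => i c; rewrite !mxE.
by case: eqP => [->|]; rewrite ?mulr1 ?mul1r ?mulr0 ?mul0r.
Qed.

Lemma tr_level_mul_diag : U^T *m H = Lam *m U^T.
Proof. by rewrite -[H]tr_diag_mx -[Lam]tr_diag_mx -!trmx_mul level_diag_mul. Qed.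

Lemma level_mx_row_sum i : \sum_c U i c = 1.
Proof.
rewrite (bigD1 (lvl i)) //= big1 ?addr0 ?mxE ?eqxx // => c /negPf ne_c.
by rewrite mxE eq_sym ne_c.
Qed.

Lemma level_mx_ones : U *m const_mx 1 *m U^T = const_mx 1.
Proof.
have ones i c : (U *m const_mx 1) i c = 1.
  rewrite mxE; transitivity (\sum_c' U i c'); last exact: level_mx_row_sum.
  by apply: eq_bigr => c' _; rewrite [const_mx _ _ _]mxE mulr1.
apply/matrixP => i j; rewrite !mxE.
transitivity (\sum_c U j c); last exact: level_mx_row_sum.
by apply: eq_bigr => c _; rewrite ones mul1r mxE.
Qed.

Definition sandwich (B : 'M[algC]_K) : 'M[algC]_m := U *m B *m U^T.

Lemma sandwich0 : sandwich 0 = 0.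
Proof. by rewrite /sandwich mulmx0 mul0mx. Qed.

Lemma sandwichD B B' : sandwich (B + B') = sandwich B + sandwich B'.
Proof. by rewrite /sandwich mulmxDr mulmxDl. Qed.

Lemma sandwichN B : sandwich (- B) = - sandwich B.
Proof. by rewrite /sandwich mulmxN mulNmx. Qed.

Lemma sandwichZ c B : sandwich (c *: B) = c *: sandwich B.
Proof. by rewrite /sandwich -scalemxAr -scalemxAl. Qed.

Lemma level_diag_mul_sandwich B : H *m sandwich B = sandwich (Lam *m B).
Proof. by rewrite /sandwich !mulmxA level_diag_mul. Qed.

Lemma sandwich_mul_level_diag B : sandwich B *m H = sandwich (B *m Lam).
Proof. by rewrite /sandwich -!mulmxA tr_level_mul_diag. Qed.

Lemma sandwich_mul B B' :
  sandwich B *m sandwich B' = sandwich (B *m (U^T *m U) *m B').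
Proof. by rewrite /sandwich !mulmxA. Qed.

Definition level_span (X : 'M[algC]_m) : Prop :=
  exists (a : algC) (B : 'M[algC]_K), X = a *: H + sandwich B.

Lemma level_span_real_lie_closed : real_lie_closed level_span.
Proof.
split; [|split; [|split]].
- by exists 0, 0; rewrite scale0r sandwich0 addr0.
- move=> _ _ [a [B ->]] [b [B' ->]]; exists (a + b), (B + B').
  by rewrite scalerDl sandwichD addrACA.
- move=> c _ _ [a [B ->]]; exists (c * a), (c *: B).
  by rewrite scalerDr scalerA sandwichZ.
move=> _ _ [a [B ->]] [b [B' ->]].
exists 0, (a *: (Lam *m B' - B' *m Lam) - b *: (Lam *m B - B *m Lam)
           + (B *m (U^T *m U) *m B' - B' *m (U^T *m U) *m B)).
rewrite /lie_bracket !(mulmxDl, mulmxDr) -!(scalemxAl, scalemxAr).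
rewrite !level_diag_mul_sandwich !sandwich_mul_level_diag !sandwich_mul.
rewrite scale0r add0r !(sandwichD, sandwichN, sandwichZ).
move: (H *m H) (sandwich (Lam *m B)) (sandwich (B *m Lam)) (sandwich (Lam *m B'))
  (sandwich (B' *m Lam)) (sandwich (B *m (U^T *m U) *m B'))
  (sandwich (B' *m (U^T *m U) *m B)) => HH LB BL LB' B'L BB' B'B.
by apply/matrixP => i j; rewrite !mxE; ring.
Qed.

Definition level_coords (w : 'rV[algC]_(1 + K * K)) : 'M[algC]_m :=
  lsubmx w 0 0 *: H + sandwich (vec_mx (rsubmx w)).

Lemma level_coords_is_linear : linear level_coords.
Proof.
move=> c w w'; rewrite /level_coords !linearP /= mxE.
rewrite sandwichD sandwichZ.
by apply/matrixP => i j; rewrite !mxE; ring.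
Qed.

HB.instance Definition _ :=
  GRing.isLinear.Build algC _ _ *:%R level_coords level_coords_is_linear.

Lemma level_span_real_dim_le : real_dim_le level_span ((1 + K * K) + (1 + K * K)).
Proof.
apply: (@real_dim_le_linear_image _ _ level_coords) => _ [a [B ->]].
exists (row_mx a%:M (mxvec B)).
by rewrite /= /level_coords row_mxKl row_mxKr mxvecK mxE eqxx mulr1n.
Qed.

Lemma lie_generated_sub_level_span X :
  lie_generated (fun Y => Y = 'i *: H \/ Y = 'i *: const_mx 1) X -> level_span X.
Proof.
apply; first exact: level_span_real_lie_closed.
move=> _ [->|->]; first by exists 'i, 0; rewrite sandwich0 addr0.
by exists 0, ('i *: const_mx 1); rewrite scale0r add0r sandwichZ /sandwich level_mx_ones.
Qed.

End LevelSpan.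

Lemma cut_cost_lt n (e : rel 'I_n) (z : 'I_n -> bool) : (cut_cost e z < (n * n).+1)%N.
Proof. by rewrite ltnS; apply: leq_trans (max_card _) _; rewrite card_prod card_ord. Qed.

Definition cut_level n (e : rel 'I_n) (i : 'I_(2 ^ n)) : 'I_(n * n).+1 :=
  Ordinal (cut_cost_lt e (bit_of i)).

Lemma H_C_level_diag n (e : rel 'I_n) :
  H_C e = level_diag (cut_level e) (fun c => (c : nat)%:R).
Proof. by apply/matrixP => i j; rewrite !mxE eq_sym; case: eqP => // ->. Qed.

Theorem corollary3 :
  exists (C N : nat), forall n : nat, (N <= n)%N ->
    forall e : rel 'I_n, simple_graph e ->
      real_dim_le (g_QWOA_MaxCut e) (C * n ^ 4).
Proof.
exists 10, 1 => n n_gt0 e _ k v gv vindep.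
have gv_level i : level_span (cut_level e) (fun c => (c : nat)%:R) (v i).
  by apply: lie_generated_sub_level_span; rewrite -H_C_level_diag; exact: gv.
apply: leq_trans (level_span_real_dim_le gv_level vindep) _.
nia.
Qed.
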